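(* Let $S=\{s_1<\dots<s_{k_1}\}$ and $T=\{t_1<\dots<t_{k_2}\}$ be nonempty subsets of $\{1,\dots,n-1\}$ with $\max S+\min T\le n$ and $\min S+\max T\le n$, let $D$ be the digraph of $T_n\langle S;T\rangle$ and $d=\gcd\{s+t: s\in S,t\in T\}$. Let $\mathcal{I}_n=\{-n+1,\dots,n-1\}$ and for each positive integer $i$ define $P_i=\{\ell\in\mathcal{I}_n: \ell\equiv is_1\pmod d\}$; $Q_i=\{\sum_{j=1}^{k_1}a_js_j-\sum_{j=1}^{k_2}b_jt_j\in\mathcal{I}_n : a_j,b_j\in\mathbb{Z}_{\ge0},\ \sum_j a_j+\sum_j b_j=i\}$; $R_i$ = the set of $\ell\in\mathcal{I}_n$ such that for all vertices $u,v$ of $D$ with $v-u=\ell$ there is a directed $(u,v)$-walk of length $i$ in $D$. Then there is a positive integer $M$ such that $P_i=Q_i=R_i$ for every integer $i\ge M$.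
   Context: $T_n\langle S;T\rangle$ is the $n\times n$ $(0,1)$-matrix whose $(i,j)$-entry is $1$ iff $j-i\in S$ or $i-j\in T$; its digraph $D$ has vertex set $[n]$ and arc $(i,j)$ iff that entry is $1$. *)

From mathcomp Require Import all_boot all_order all_algebra.
Set Implicit Arguments. Unset Strict Implicit. Unset Printing Implicit Defensive.
Import GRing.Theory Num.Theory.

(* Sets S, T of positive integers are represented by duplicate-free lists of nat. *)
Definition seqmax (S : seq nat) : nat := \max_(s <- S) s.
Definition seqmin (S : seq nat) : nat := foldr minn (head 0%N S) S.

Definition gcdST (S T : seq nat) : nat :=
  foldr gcdn 0%N [seq (s + t)%N | s <- S, t <- T].

Definition arcST (S T : seq nat) (u v : nat) : bool :=
  ((u < v) && ((v - u)%N \in S)) || ((v < u) && ((u - v)%N \in T)).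

Fixpoint walkST (n : nat) (S T : seq nat) (i u v : nat) : bool :=
  match i with
  | 0 => u == v
  | i'.+1 => has (fun w => arcST S T u w && walkST n S T i' w v) (iota 1 n)
  end.

Definition inIn (n : nat) (l : int) : bool := (- (n%:Z) < l < n%:Z)%R.

Definition Pset (n : nat) (S T : seq nat) (i : nat) (l : int) : Prop :=
  inIn n l /\ (l = ((i * seqmin S)%N)%:Z %[mod (gcdST S T)%:Z])%Z.

Definition Qset (n : nat) (S T : seq nat) (i : nat) (l : int) : Prop :=
  inIn n l /\
  exists (a b : nat -> nat),
    (\sum_(s <- S) a s + \sum_(t <- T) b t)%N = i /\
    l = ((\sum_(s <- S) a s * s)%N%:Z - (\sum_(t <- T) b t * t)%N%:Z)%R.

Definition Rset (n : nat) (S T : seq nat) (i : nat) (l : int) : Prop :=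
  inIn n l /\
  forall u v : nat, (1 <= u <= n)%N -> (1 <= v <= n)%N ->
    (v%:Z - u%:Z)%R = l -> walkST n S T i u v.

(* A walk of length i uses a_s forward arcs s and b_t backward arcs t, so R_i is
   contained in Q_i; as s = c and -t = c (mod d) for c = min S, Q_i is contained in P_i.
   Conversely, put tau = min T and look at the top block of vertices n - z, z < c + tau.
   For s in S and t in T the arcs +s, -t on the top s + t vertices act as the rotation
   z |-> z + t mod (s + t); it links top vertices congruent mod gcd(s, t), and a
   Fine-Wilf argument combines these links into links between all top vertices
   congruent mod gcd(c, d), which is all that l = ic (mod d) leaves. Every u reaches
   the top block by steps +c and every v is reached from it by steps -tau. The
   rotations also give closed walks of every large multiple of
   h = gcd{(s + tau)/gcd(s, tau), (c + t)/gcd(c, t)}, and since all elements of S and T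
   have the same pi(h)-part, d | m c forces h | m, so any walk can be padded to every
   length i with l = ic (mod d). Finitely many pairs (u, v) give a uniform bound. *)

From mathcomp Require Import all_boot all_order all_algebra.
From mathcomp Require Import zify ring.
Set Implicit Arguments. Unset Strict Implicit. Unset Printing Implicit Defensive.
Import GRing.Theory.

Lemma sum_indicator (I : eqType) (r : seq I) x (F : I -> nat) :
  uniq r -> x \in r -> \sum_(y <- r) (y == x) * F y = F x.
Proof.
move=> ur xr; rewrite (eq_bigr (fun y => if y == x then F y else 0)) => [|y _].
  by rewrite -big_mkcond -big_filter filter_pred1_uniq // big_seq1.
by case: eqP; rewrite ?mul1n.
Qed.

Lemma sum_incr (r : seq nat) x (a F : nat -> nat) : uniq r -> x \in r ->
  \sum_(y <- r) (a y + (y == x)) * F y = \sum_(y <- r) a y * F y + F x.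
Proof.
by move=> ur xr; under eq_bigr do rewrite mulnDl; rewrite big_split sum_indicator.
Qed.

Lemma sum_incr1 (r : seq nat) x (a : nat -> nat) : uniq r -> x \in r ->
  \sum_(y <- r) (a y + (y == x)) = \sum_(y <- r) a y + 1.
Proof.
move=> ur xr; rewrite big_split -(sum_indicator (fun=> 1) ur xr).
by congr (_ + _); apply: eq_bigr => y _; rewrite muln1.
Qed.

Lemma sum_natz (r : seq nat) (F : nat -> nat) :
  ((\sum_(x <- r) F x)%N%:Z = \sum_(x <- r) (F x)%:Z)%R.
Proof. exact: (big_morph Posz PoszD (erefl _)). Qed.

Lemma foldr_minn_le a l x : x \in l -> foldr minn a l <= x.
Proof.
by elim: l => //= y l IH; rewrite in_cons geq_min => /orP[/eqP->|/IH->]; rewrite ?leqnn ?orbT.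
Qed.

Lemma foldr_minn_mem a l : foldr minn a l \in a :: l.
Proof.
elim: l => [|y l IH] /=; first exact: mem_head.
rewrite /minn; case: ifP => _; first by rewrite !in_cons eqxx orbT.
by move: IH; rewrite !in_cons => /orP[->|->]; rewrite ?orbT.
Qed.

Lemma seqmin_mem S : S != [::] -> seqmin S \in S.
Proof.
case: S => // x l _; have := foldr_minn_mem x (x :: l).
by rewrite /seqmin /= in_cons orbA orbb -in_cons.
Qed.

Lemma seqmin_le S s : s \in S -> seqmin S <= s.
Proof. exact: foldr_minn_le. Qed.

Lemma seqmax_ge S s : s \in S -> s <= seqmax S.
Proof. by move=> sS; apply: (@leq_bigmax_seq _ S xpredT id s). Qed.

Lemma dvdn_foldr_gcdn m a l : (m %| foldr gcdn a l) = (m %| a) && all (dvdn m) l.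
Proof. by elim: l => [|x l IH] /=; rewrite ?andbT // dvdn_gcd IH andbCA. Qed.

Lemma foldr_gcdn_dvd a l x : x \in l -> foldr gcdn a l %| x.
Proof. by move: (dvdnn (foldr gcdn a l)); rewrite dvdn_foldr_gcdn => /andP[_ /allP]; apply. Qed.

Lemma foldr_gcdn_dvd_init a l : foldr gcdn a l %| a.
Proof. by move: (dvdnn (foldr gcdn a l)); rewrite dvdn_foldr_gcdn => /andP[]. Qed.

Lemma modn_mul_solvable m t x : 0 < m -> gcdn m t %| x -> exists k, x + k * t = 0 %[mod m].
Proof.
move=> m_gt0 /dvdnP[j ->]; have [a _ /dvdnP[q Bez]] := Bezoutl t m_gt0.
by exists (j * a); rewrite -mulnA -mulnDr Bez mulnA modnMl mod0n.
Qed.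

Lemma modn_eq_dvdz g x y : (g%:Z %| (x%:Z - y%:Z)%R)%Z -> x = y %[mod g].
Proof. by rewrite -eqz_mod_dvd => /eqP; rewrite !modz_nat => -[]. Qed.

Lemma inIn_endpoints n l : inIn n l ->
  exists u v, [/\ 1 <= u <= n, 1 <= v <= n & (v%:Z - u%:Z)%R = l].
Proof.
rewrite /inIn; case: l => k /andP[lo hi].
  by exists 1, k.+1; split; lia.
by exists k.+2, 1; rewrite NegzE in lo *; split; lia.
Qed.

Definition eventually (P : nat -> Prop) := exists B, forall i, B <= i -> P i.

Lemma eventually_all (I : eqType) (r : seq I) (P : I -> nat -> Prop) :
  {in r, forall x, eventually (P x)} -> eventually (fun i => {in r, forall x, P x i}).
Proof.
elim: r => [|x r IH] Pr; first by exists 0.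
have [B PB] := Pr x (mem_head x r).
have [B' PB'] : eventually (fun i => {in r, forall y, P y i}).
  by apply: IH => y yr; apply: Pr; rewrite in_cons yr orbT.
exists (maxn B B') => i; rewrite geq_max => /andP[Bi B'i] y.
by rewrite in_cons => /orP[/eqP->|/(PB' i B'i)//]; apply: PB.
Qed.

Section ConnectedMod.
Variables (N : nat) (R : nat -> nat -> Prop).
Hypotheses (R_refl : forall x, R x x) (R_sym : forall x y, R x y -> R y x)
  (R_trans : forall x y z, R x y -> R y z -> R x z).

Definition connected_mod m := forall x y, x < N -> y < N -> x = y %[mod m] -> R x y.

Lemma connected_mod_dvd m m' : m %| m' -> connected_mod m -> connected_mod m'.
Proof.
move=> mm' Rm x y xN yN xy; apply: Rm => //.
by rewrite -(modn_dvdm x mm') xy modn_dvdm.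
Qed.

Lemma connected_mod_shift m : (forall x, x + m < N -> R x (x + m)) -> connected_mod m.
Proof.
move=> Rm; have Rjm j x : x + j * m < N -> R x (x + j * m).
  elim: j x => [|j IH] x; first by rewrite addn0.
  by rewrite mulSn addnA => lt; apply: R_trans (Rm x _) (IH _ lt); lia.
move=> x y; wlog le_xy : x y / x <= y => [hw xN yN xy|xN yN /esym/eqP].
  by case: (leqP x y) => [|/ltnW] le; [apply: hw | apply/R_sym/hw].
rewrite eqn_mod_dvd // => /dvdnP[j yx].
by rewrite -(subnKC le_xy) yx; apply: Rjm; lia.
Qed.

Lemma connected_mod_sub a b : a < b -> a + b <= N ->
  connected_mod a -> connected_mod b -> connected_mod (b - a).
Proof.
move=> lt_ab abN Ra Rb.
have add_linked m z : connected_mod m -> z + m < N -> R z (z + m).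
  by move=> Rm zmN; apply: Rm; rewrite ?modnDr //; lia.
apply: connected_mod_shift => x xN; case: (ltnP (x + b) N) => xbN.
  apply: R_trans (add_linked _ _ Rb xbN) _; apply/R_sym.
  by rewrite (_ : x + b = x + (b - a) + a) in xbN *; [apply: add_linked | lia].
have le_ax : a <= x by lia.
apply: (@R_trans _ (x - a)).
  by apply/R_sym; rewrite -{2}(subnK le_ax); apply: add_linked Ra _; rewrite subnK //; lia.
by rewrite (_ : x + (b - a) = x - a + b) in xN *; [apply: add_linked | lia].
Qed.

(* Fine--Wilf: the subtractive Euclidean algorithm stays within the window of length N. *)
Lemma connected_mod_gcdn a b : a + b <= N ->
  connected_mod a -> connected_mod b -> connected_mod (gcdn a b).
Proof.
have [k] := ubnP (a + b); elim: k a b => // k IH a b lt_ab_k abN Ra Rb.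
wlog le_ab : a b lt_ab_k abN Ra Rb / a <= b => [hw|].
  by case: (leqP a b) => [|/ltnW] le; [|rewrite gcdnC]; apply: hw => //; lia.
have [->|a_gt0] := posnP a; first by rewrite gcd0n.
move: le_ab; rewrite leq_eqVlt => /orP[/eqP<-|lt_ab]; first by rewrite gcdnn.
rewrite -(subnK (ltnW lt_ab)) gcdnDr; apply: IH; rewrite ?subnK //; try lia.
exact: connected_mod_sub.
Qed.

Lemma connected_mod_foldr_gcdn a l : 0 < a -> connected_mod a ->
  {in l, forall g, g + a <= N /\ connected_mod g} -> connected_mod (foldr gcdn a l).
Proof.
move=> a_gt0 Ra; elim: l => //= g l IH Rl.
have [gaN Rg] := Rl g (mem_head g l).
have le_a : foldr gcdn a l <= a.
  exact: dvdn_leq a_gt0 (foldr_gcdn_dvd_init a l).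
apply: connected_mod_gcdn => //; first lia.
by apply: IH => x xl; apply: Rl; rewrite in_cons xl orbT.
Qed.

End ConnectedMod.

Section AdditiveClosure.
Variable X : nat -> Prop.
Hypotheses (X0 : X 0) (XD : forall a b, X a -> X b -> X (a + b)).

Lemma closed_mul k a : X a -> X (k * a).
Proof. by move=> Xa; elim: k => [|k IH]; rewrite ?mul0n // mulSn; apply: XD. Qed.

(* Write m = q * (p %/ g) + r with r < p %/ g; once m >= (p %/ g)^2 we have r <= q,
   and m * g = (q - r) * p + r * (p + g). *)
Lemma closed_large_mul_step p g : X p -> X (p + g) -> g %| p ->
  exists K, forall m, K <= m -> X (m * g).
Proof.
move=> Xp Xpg /dvdnP[P p_eq]; have [P0|P_gt0] := posnP P.
  by exists 0 => m _; apply: closed_mul; rewrite p_eq P0 mul0n add0n in Xpg.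
exists (P * P) => m le_m; set q := m %/ P; set r := m %% P.
have lt_rq : r < q by rewrite (leq_trans (ltn_pmod m P_gt0)) // leq_divRL.
have -> : m * g = (q - r) * p + r * (p + g).
  rewrite mulnDr addnA -mulnDl (subnK (ltnW lt_rq)) p_eq mulnA -mulnDl.
  by rewrite /q /r -divn_eq.
by apply: XD; apply: closed_mul.
Qed.

Lemma closed_large_mul_gcdn a b : 0 < a -> X a -> X b ->
  exists K, forall m, K <= m -> X (m * gcdn a b).
Proof.
move=> a_gt0 Xa Xb; have [k _ /dvdnP[q bez]] := Bezoutl b a_gt0.
apply: (closed_large_mul_step (p := k * b)); first exact: closed_mul.
  by rewrite addnC bez; apply: closed_mul.
exact/dvdn_mull/dvdn_gcdr.
Qed.

Lemma closed_large_mul_foldr_gcdn l : {in l, forall x, X x} ->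
  exists K, forall m, K <= m -> X (m * foldr gcdn 0 l).
Proof.
elim: l => [|x l IH] /= Xl; first by exists 0 => m _; rewrite muln0.
set g := foldr gcdn 0 l; have Xx := Xl x (mem_head x l).
have [K XK] : exists K, forall m, K <= m -> X (m * g).
  by apply: IH => y yl; apply: Xl; rewrite in_cons yl orbT.
have [->|g_gt0] := posnP g; first by exists 0 => m _; rewrite gcdn0; apply: closed_mul.
have [->|x_gt0] := posnP x; first by exists K; rewrite gcd0n.
have XKx : X ((K * x + 1) * g) by apply: XK; rewrite addn1 leqW ?leq_pmulr.
have Kxg_gt0 : 0 < (K * x + 1) * g by rewrite muln_gt0 g_gt0 addn1.
have [K' XK'] := closed_large_mul_gcdn Kxg_gt0 XKx Xx.
exists K' => m /XK'; congr (X (_ * _)).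
by rewrite gcdnC Gauss_gcdr // /coprime gcdnMDl gcdn1.
Qed.

End AdditiveClosure.

Section PiPart.
Variable h : nat.

Lemma partn_gcdn a b : 0 < a -> h %| (a + b) %/ gcdn a b ->
  a`_\pi(h) = (gcdn a b)`_\pi(h).
Proof.
move=> a_gt0 h_dvd; have G_gt0 : 0 < gcdn a b by rewrite gcdn_gt0 a_gt0.
have [a' a_eq] := dvdnP (dvdn_gcdl a b); have [b' b_eq] := dvdnP (dvdn_gcdr a b).
have a'_gt0 : 0 < a' by move: a_gt0; rewrite a_eq muln_gt0 => /andP[].
have cop_a'b' : gcdn a' b' = 1.
  by apply/eqP; rewrite -(eqn_pmul2r G_gt0) mul1n muln_gcdl -a_eq -b_eq.
have ab_eq : a + b = (a' + b') * gcdn a b by rewrite mulnDl -a_eq -b_eq.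
rewrite ab_eq mulnK // in h_dvd.
have h_gt0 : 0 < h by apply: dvdn_gt0 h_dvd; rewrite addn_gt0 a'_gt0.
have : coprime h a'.
  by rewrite coprime_sym (coprime_dvdr h_dvd) // /coprime gcdnDl cop_a'b'.
rewrite coprime_pi' // => /part_p'nat a'_1.
by rewrite {1}a_eq partnM // a'_1 mul1n.
Qed.

Lemma partn_eq_of_dvdn a b : 0 < a -> 0 < b -> h %| (a + b) %/ gcdn a b ->
  a`_\pi(h) = b`_\pi(h).
Proof.
move=> a_gt0 b_gt0 h_dvd; rewrite (partn_gcdn a_gt0 h_dvd) gcdnC -partn_gcdn //.
by rewrite addnC gcdnC.
Qed.

Lemma dvdn_mul_partn a b : 0 < a -> h %| (a + b) %/ gcdn a b -> h * a`_\pi(h) %| a + b.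
Proof.
move=> a_gt0 h_dvd; rewrite (partn_gcdn a_gt0 h_dvd).
rewrite -(divnK (_ : gcdn a b %| a + b)) ?dvdn_add ?dvdn_gcdl ?dvdn_gcdr //.
exact: dvdn_mul h_dvd (dvdn_part _ _).
Qed.

End PiPart.

Definition step_sum (S T : seq nat) (i : nat) (l : int) : Prop :=
  exists a b : nat -> nat,
    (\sum_(s <- S) a s + \sum_(t <- T) b t)%N = i /\
    l = ((\sum_(s <- S) a s * s)%N%:Z - (\sum_(t <- T) b t * t)%N%:Z)%R.

Lemma step_sum_mod (S T : seq nat) (d c i : nat) (l : int) :
  {in S, forall s, (d %| (s%:Z - c%:Z)%R)%Z} -> {in T, forall t, (d %| (t%:Z + c%:Z)%R)%Z} ->
  step_sum S T i l -> (d %| (l - (i * c)%N%:Z)%R)%Z.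
Proof.
move=> dS dT [a [b [<- ->]]].
have sumS : ((\sum_(s <- S) a s * s)%N%:Z - ((\sum_(s <- S) a s) * c)%N%:Z =
    \sum_(s <- S) (a s)%:Z * (s%:Z - c%:Z))%R.
  by rewrite big_distrl !sum_natz -sumrB; apply: eq_bigr => s _; rewrite mulrBr !PoszM.
have sumT : ((\sum_(t <- T) b t * t)%N%:Z + ((\sum_(t <- T) b t) * c)%N%:Z =
    \sum_(t <- T) (b t)%:Z * (t%:Z + c%:Z))%R.
  by rewrite big_distrl !sum_natz -big_split; apply: eq_bigr => t _; rewrite mulrDr !PoszM.
rewrite mulnDl PoszD opprD addrACA -opprD sumS sumT.
apply: rpredB; rewrite big_seq; apply: rpred_sum => x xr; apply: dvdz_mull.
  exact: dS.
exact: dT.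
Qed.

Section Walks.
Variables (n : nat) (S T : seq nat).

Lemma walk_cat i j u w v :
  walkST n S T i u w -> walkST n S T j w v -> walkST n S T (i + j) u v.
Proof.
elim: i u => [|i IH] u /=; first by move/eqP->.
by move=> /hasP[x xn /andP[ux xw]] wv; apply/hasP; exists x; rewrite // ux IH.
Qed.

Lemma walk_arc u v : 1 <= v <= n -> arcST S T u v -> walkST n S T 1 u v.
Proof.
by move=> vn uv; apply/hasP; exists v; rewrite ?mem_iota ?uv ?eqxx //; lia.
Qed.

Lemma walk_cons i u w v : 1 <= w <= n -> arcST S T u w -> walkST n S T i w v ->
  walkST n S T i.+1 u v.
Proof. by move=> wn uw wv; rewrite -add1n; apply: walk_cat wv; apply: walk_arc. Qed.

Lemma arcST_cases u w : arcST S T u w ->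
  (exists2 s, s \in S & w = u + s) \/ (exists2 t, t \in T & u = w + t).
Proof.
case/orP=> /andP[lt uw]; [left; exists (w - u) | right; exists (u - w)] => //; lia.
Qed.

Lemma walk_step_sum k u v : uniq S -> uniq T ->
  walkST n S T k u v -> step_sum S T k (v%:Z - u%:Z).
Proof.
move=> uS uT; elim: k u => [|k IH] u /=.
  by move/eqP->; exists (fun=> 0), (fun=> 0); rewrite !big1 // subrr.
move=> /hasP[w _ /andP[/arcST_cases uw /IH[a [b [len wv]]]]].
case: uw => [[s sS uw]|[t tT wu]].
  exists (fun x => a x + (x == s)), b.
  by rewrite sum_incr1 // (sum_incr _ (fun x => x)) //; split; lia.
exists a, (fun x => b x + (x == t)).
by rewrite sum_incr1 // (sum_incr _ (fun x => x)) //; split; lia.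
Qed.

End Walks.

Section Rotation.
Variables (n : nat) (S T : seq nat) (s t : nat).
Hypotheses (sS : s \in S) (tT : t \in T) (s_gt0 : 0 < s) (t_gt0 : 0 < t) (st_le_n : s + t <= n).

Let gcd_dvd_st : gcdn s t %| s + t.
Proof. by rewrite dvdn_add ?dvdn_gcdl ?dvdn_gcdr. Qed.

Lemma arc_rot z : z < s + t -> arcST S T (n - z) (n - (z + t) %% (s + t)).
Proof.
move=> z_lt; rewrite /arcST; case: (ltnP z s) => zs.
  rewrite modn_small; last lia.
  by apply/orP; right; rewrite (_ : n - z - (n - (z + t)) = t) ?tT ?andbT; lia.
have -> : (z + t) %% (s + t) = z - s.
  by rewrite (_ : z + t = z - s + (s + t)) ?modnDr ?modn_small; lia.
by apply/orP; left; rewrite (_ : n - (z - s) - (n - z) = s) ?sS ?andbT; lia.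
Qed.

Lemma walk_rot k z : z < s + t -> walkST n S T k (n - z) (n - (z + k * t) %% (s + t)).
Proof.
elim: k z => [|k IH] z z_lt; first by rewrite /= addn0 modn_small.
have z1_lt : (z + t) %% (s + t) < s + t by rewrite ltn_mod; lia.
apply: (walk_cons _ (arc_rot z_lt)); first lia.
by have := IH _ z1_lt; rewrite modnDml -addnA -mulSn.
Qed.

Lemma walk_rot_closed z : z < s + t ->
  walkST n S T ((s + t) %/ gcdn s t) (n - z) (n - z).
Proof.
move=> z_lt; have := walk_rot ((s + t) %/ gcdn s t) z_lt.
rewrite [_ * t]mulnC (muln_divCA (dvdn_gcdr s t) gcd_dvd_st).
by rewrite [z + _]addnC [_ * (t %/ _)]mulnC modnMDl modn_small.
Qed.

Lemma walk_rot_congr z z' : z < s + t -> z' < s + t -> z = z' %[mod gcdn s t] ->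
  exists k, walkST n S T k (n - z) (n - z').
Proof.
move=> z_lt z'_lt zz'; set x := z + (s + t) - z'.
have g_x : gcdn (s + t) t %| x.
  rewrite gcdnC gcdnDr gcdnC -eqn_mod_dvd; last lia.
  by rewrite -modnDmr (eqP gcd_dvd_st) addn0 zz'.
have [k xk] := modn_mul_solvable (ltn_addl s t_gt0) g_x.
exists k; suff <- : (z + k * t) %% (s + t) = z' by apply: walk_rot.
rewrite -(modnDr _ (s + t)).
have -> : z + k * t + (s + t) = x + k * t + z' by rewrite /x; clear -z'_lt; lia.
by rewrite -modnDml xk mod0n add0n modn_small.
Qed.

End Rotation.

Section Toeplitz.
Variables (n : nat) (S T : seq nat).
Hypotheses (S_neq0 : S != [::]) (T_neq0 : T != [::]) (uniq_S : uniq S) (uniq_T : uniq T)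
  (S_range : all (fun s => 0 < s < n) S) (T_range : all (fun t => 0 < t < n) T)
  (maxS_minT : seqmax S + seqmin T <= n) (minS_maxT : seqmin S + seqmax T <= n).

Local Notation c := (seqmin S).
Local Notation tau := (seqmin T).
Local Notation d := (gcdST S T).
Local Notation walk := (walkST n S T).

Let c_in_S : c \in S := seqmin_mem S_neq0.
Let tau_in_T : tau \in T := seqmin_mem T_neq0.
Let S_gt0 s : s \in S -> 0 < s. Proof. by move=> /(allP S_range)/andP[]. Qed.
Let T_gt0 t : t \in T -> 0 < t. Proof. by move=> /(allP T_range)/andP[]. Qed.
Let c_gt0 : 0 < c := S_gt0 c_in_S.
Let tau_gt0 : 0 < tau := T_gt0 tau_in_T.
Let S_add_tau s : s \in S -> s + tau <= n.
Proof. by move=> /seqmax_ge; lia. Qed.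
Let c_add_T t : t \in T -> c + t <= n.
Proof. by move=> /seqmax_ge; lia. Qed.

Lemma d_dvd_add s t : s \in S -> t \in T -> d %| s + t.
Proof. by move=> sS tT; apply: foldr_gcdn_dvd; apply: allpairs_f. Qed.

Lemma d_dvd_sub_c s : s \in S -> (d %| (s%:Z - c%:Z)%R)%Z.
Proof.
move=> sS; rewrite (_ : (s%:Z - c%:Z = (s + tau)%N%:Z - (c + tau)%N%:Z)%R); last lia.
by apply: rpredB; rewrite dvdzE d_dvd_add.
Qed.

Lemma d_dvd_add_c t : t \in T -> (d %| (t%:Z + c%:Z)%R)%Z.
Proof. by move=> tT; rewrite -PoszD dvdzE addnC d_dvd_add. Qed.

Lemma walk_mod k u v : walk k u v -> (d %| (v%:Z - u%:Z - (k * c)%N%:Z)%R)%Z.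
Proof.
move/(walk_step_sum uniq_S uniq_T); apply: step_sum_mod.
  exact: d_dvd_sub_c.
exact: d_dvd_add_c.
Qed.

Lemma gcd_dvd_of_mod k (x : int) : (d %| (x - (k * c)%N%:Z)%R)%Z -> (gcdn c d %| x)%Z.
Proof.
move=> dx; rewrite -[x](subrK (Posz (k * c))); apply: rpredD.
  by apply: dvdz_trans dx; rewrite dvdzE dvdn_gcdr.
by rewrite dvdzE dvdn_mull ?dvdn_gcdl.
Qed.

Lemma walk_gcd_dvd k u v : walk k u v -> (gcdn c d %| (v%:Z - u%:Z)%R)%Z.
Proof. by move/walk_mod/gcd_dvd_of_mod. Qed.

Lemma walk_to_top u : 1 <= u <= n -> exists k z, z < c + tau /\ walk k u (n - z).
Proof.
have [m] := ubnP (n - u); elim: m u => // m IH u lt_m u_range.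
have [top|] := ltnP (n - u) (c + tau).
  by exists 0, (n - u); rewrite /= subKn; last lia.
move=> le_ct; have /IH[|k [z [z_lt W]]] : n - (u + c) < m by lia.
  lia.
exists k.+1, z; split=> //; apply: walk_cons W; first lia.
by rewrite /arcST addKn c_in_S -[X in X < _ + c]addn0 ltn_add2l c_gt0.
Qed.

Lemma walk_from_top v : 1 <= v <= n -> exists k z, z < c + tau /\ walk k (n - z) v.
Proof.
have [m] := ubnP (n - v); elim: m v => // m IH v lt_m v_range.
have [top|] := ltnP (n - v) (c + tau).
  by exists 0, (n - v); rewrite /= subKn; last lia.
move=> le_ct; have /IH[|k [z [z_lt W]]] : n - (v + tau) < m by lia.
  lia.
exists (k + 1), z; split=> //; apply: walk_cat W (walk_arc _ _); first lia.
by rewrite /arcST addKn tau_in_T -[X in X < _ + tau]addn0 ltn_add2l tau_gt0 orbT.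
Qed.

Definition top_linked z z' :=
  (exists k, walk k (n - z) (n - z')) /\ (exists k, walk k (n - z') (n - z)).

Lemma top_linked_refl z : top_linked z z.
Proof. by split; exists 0; rewrite /= eqxx. Qed.

Lemma top_linked_sym z z' : top_linked z z' -> top_linked z' z.
Proof. by case. Qed.

Lemma top_linked_trans z1 z2 z3 : top_linked z1 z2 -> top_linked z2 z3 -> top_linked z1 z3.
Proof.
move=> [[k1 W1] [k1' W1']] [[k2 W2] [k2' W2']].
by split; [exists (k1 + k2); apply: walk_cat W1 W2 | exists (k2' + k1'); apply: walk_cat W2' W1'].
Qed.

Lemma top_connected_rot s t : s \in S -> t \in T -> c + tau <= s + t -> s + t <= n ->
  connected_mod (c + tau) top_linked (gcdn s t).
Proof.
move=> sS tT le_st stn z z' zN z'N zz'.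
have [lt_z lt_z'] := (leq_trans zN le_st, leq_trans z'N le_st).
have [s_gt0 t_gt0] := (S_gt0 sS, T_gt0 tT).
by split; apply: (walk_rot_congr sS tT) => //; rewrite zz'.
Qed.

Definition top_gcds := [seq gcdn s tau | s <- S] ++ [seq gcdn c t | t <- T].

Lemma top_connected_gcds :
  connected_mod (c + tau) top_linked (foldr gcdn (gcdn c tau) top_gcds).
Proof.
apply: connected_mod_foldr_gcdn; rewrite ?gcdn_gt0 ?c_gt0 //.
- exact: top_linked_refl.
- exact: top_linked_sym.
- exact: top_linked_trans.
- exact: top_connected_rot c_in_S tau_in_T (leqnn _) (S_add_tau c_in_S).
move=> g; rewrite mem_cat => /orP[] /mapP[x xST ->].
  have le_x := dvdn_leq tau_gt0 (dvdn_gcdr x tau).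
  have le_c := dvdn_leq c_gt0 (dvdn_gcdl c tau).
  split; first lia.
  by apply: (top_connected_rot xST tau_in_T _ (S_add_tau xST)); rewrite leq_add2r seqmin_le.
have le_x := dvdn_leq c_gt0 (dvdn_gcdl c x).
have le_tau := dvdn_leq tau_gt0 (dvdn_gcdr c tau).
split; first lia.
by apply: (top_connected_rot c_in_S xST _ (c_add_T xST)); rewrite leq_add2l seqmin_le.
Qed.

Lemma foldr_top_gcds_dvd : foldr gcdn (gcdn c tau) top_gcds %| gcdn c d.
Proof.
set e := foldr gcdn _ _; have e_dvd g : g \in top_gcds -> e %| g by apply: foldr_gcdn_dvd.
rewrite dvdn_gcd (dvdn_trans (foldr_gcdn_dvd_init _ _) (dvdn_gcdl _ _)) /=.
rewrite dvdn_foldr_gcdn dvdn0; apply/allP => _ /allpairsP[[s t] [/= sS tT ->]].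
apply: dvdn_add.
  by apply: dvdn_trans (e_dvd _ _) (dvdn_gcdl s tau); rewrite mem_cat (map_f (gcdn^~ tau)).
by apply: dvdn_trans (e_dvd _ _) (dvdn_gcdr c t); rewrite mem_cat (map_f (gcdn c)) ?orbT.
Qed.

Lemma top_connected : connected_mod (c + tau) top_linked (gcdn c d).
Proof. exact: connected_mod_dvd foldr_top_gcds_dvd top_connected_gcds. Qed.

Lemma walk_through_top u v : 1 <= u <= n -> 1 <= v <= n -> (gcdn c d %| (v%:Z - u%:Z)%R)%Z ->
  exists k1 k2 z, [/\ z < c + tau, walk k1 u (n - z) & walk k2 (n - z) v].
Proof.
move=> u_range v_range g_uv.
have [k1 [z1 [z1_lt W1]]] := walk_to_top u_range.
have [k2 [z2 [z2_lt W2]]] := walk_from_top v_range.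
have z12 : z1 = z2 %[mod gcdn c d].
  have le_z1 := ltnW (leq_trans z1_lt (S_add_tau c_in_S)).
  have le_z2 := ltnW (leq_trans z2_lt (S_add_tau c_in_S)).
  apply: modn_eq_dvdz; have g1 := walk_gcd_dvd W1; have g2 := walk_gcd_dvd W2.
  rewrite -!subzn // in g1 g2.
  rewrite (_ : (z1%:Z - z2%:Z =
    (v%:Z - u%:Z) - (n%:Z - z1%:Z - u%:Z) - (v%:Z - (n%:Z - z2%:Z)))%R); last ring.
  by apply: rpredB => //; apply: rpredB.
have [[k3 W3] _] := top_connected z1_lt z2_lt z12.
by exists (k1 + k3), k2, z2; split=> //; apply: walk_cat W1 W3.
Qed.

Definition rot_lengths :=
  [seq (s + tau) %/ gcdn s tau | s <- S] ++ [seq (c + t) %/ gcdn c t | t <- T].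

Local Notation h := (foldr gcdn 0 rot_lengths).

Lemma top_closed_walks z : z < c + tau ->
  exists K, forall m, K <= m -> walk (m * h) (n - z) (n - z).
Proof.
move=> z_lt; apply: (closed_large_mul_foldr_gcdn (X := fun k => walk k (n - z) (n - z))).
- by rewrite /= eqxx.
- by move=> i j; apply: walk_cat.
move=> x; rewrite mem_cat => /orP[] /mapP[y yST ->] /=.
  apply: (walk_rot_closed yST tau_in_T (S_gt0 yST) tau_gt0 (S_add_tau yST)).
  by apply: leq_trans z_lt _; rewrite leq_add2r seqmin_le.
apply: (walk_rot_closed c_in_S yST c_gt0 (T_gt0 yST) (c_add_T yST)).
by apply: leq_trans z_lt _; rewrite leq_add2l seqmin_le.
Qed.

Lemma rot_period_dvd_S s : s \in S -> h %| (s + tau) %/ gcdn s tau.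
Proof.
by move=> sS; apply: foldr_gcdn_dvd; rewrite mem_cat (map_f (fun x => (x + tau) %/ gcdn x tau)).
Qed.

Lemma rot_period_dvd_T t : t \in T -> h %| (c + t) %/ gcdn c t.
Proof.
by move=> tT; apply: foldr_gcdn_dvd; rewrite mem_cat (map_f (fun x => (c + x) %/ gcdn c x)) ?orbT.
Qed.

Lemma partn_rot_period_S s : s \in S -> s`_\pi(h) = c`_\pi(h).
Proof.
move=> sS; rewrite (partn_eq_of_dvdn (S_gt0 sS) tau_gt0 (rot_period_dvd_S sS)).
by rewrite -(partn_eq_of_dvdn c_gt0 tau_gt0 (rot_period_dvd_S c_in_S)).
Qed.

Lemma rot_period_part_dvd s t : s \in S -> t \in T -> h * c`_\pi(h) %| s + t.
Proof.
have hK_S x : x \in S -> h * c`_\pi(h) %| x + tau.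
  by move=> xS; rewrite -(partn_rot_period_S xS) dvdn_mul_partn ?S_gt0 ?rot_period_dvd_S.
have hK_T y : y \in T -> h * c`_\pi(h) %| c + y.
  by move=> yT; rewrite dvdn_mul_partn ?rot_period_dvd_T.
move=> sS tT; rewrite -(dvdn_addr _ (hK_S c c_in_S)).
rewrite (_ : c + tau + (s + t) = s + tau + (c + t)); last by ring.
exact: dvdn_add (hK_S s sS) (hK_T t tT).
Qed.

Lemma rot_period_gt0 : 0 < h.
Proof.
apply: dvdn_gt0 (rot_period_dvd_S c_in_S); rewrite divn_gt0 ?gcdn_gt0 ?c_gt0 //.
exact: leq_trans (dvdn_leq c_gt0 (dvdn_gcdl c tau)) (leq_addr tau c).
Qed.

Lemma dvdn_rot_period m : d %| m * c -> h %| m.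
Proof.
move=> d_mc; set K := c`_\pi(h).
have hK_d : h * K %| d.
  rewrite dvdn_foldr_gcdn dvdn0; apply/allP => _ /allpairsP[[s t] [/= sS tT ->]].
  exact: rot_period_part_dvd.
have : h * K %| m * c`_\pi(h)^' * K.
  by rewrite -mulnA (mulnC (c`_\pi(h)^') K) /K partnC //; apply: dvdn_trans d_mc.
rewrite dvdn_pmul2r ?part_gt0 // Gauss_dvdl //.
exact: pnat_coprime (pnat_pi rot_period_gt0) (part_pnat _ _).
Qed.

Lemma eventually_walk u v : 1 <= u <= n -> 1 <= v <= n ->
  eventually (fun i => (d %| (v%:Z - u%:Z - (i * c)%N%:Z)%R)%Z -> walk i u v).
Proof.
move=> u_range v_range; have [g_uv|g_uv] := boolP (gcdn c d %| (v%:Z - u%:Z)%R)%Z; last first.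
  by exists 0 => i _ /gcd_dvd_of_mod; rewrite (negbTE g_uv).
have [k1 [k2 [z [z_lt W1 W2]]]] := walk_through_top u_range v_range g_uv.
have [K closedW] := top_closed_walks z_lt.
exists (k1 + k2 + K * h) => i le_i d_i.
have le_k : k1 + k2 <= i := leq_trans (leq_addr _ _) le_i.
have /dvdn_rot_period/dvdnP[m i_eq] : d %| (i - (k1 + k2)) * c.
  suff : (d %| ((i - (k1 + k2)) * c)%N%:Z)%Z by rewrite dvdzE.
  rewrite PoszM -subzn //.
  rewrite (_ : ((i%:Z - (k1 + k2)%N%:Z) * c%:Z = (v%:Z - u%:Z - ((k1 + k2) * c)%N%:Z) -
    (v%:Z - u%:Z - (i * c)%N%:Z))%R); last by rewrite !PoszM; ring.
  exact: rpredB (walk_mod (walk_cat W1 W2)) d_i.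
have le_K : K <= m by rewrite -(leq_pmul2r rot_period_gt0) -i_eq leq_subRL.
rewrite (_ : i = k1 + (m * h + k2)); last by clear -le_k i_eq; lia.
exact: walk_cat W1 (walk_cat (closedW m le_K) W2).
Qed.

Lemma Qset_Pset i l : Qset n S T i l -> Pset n S T i l.
Proof.
case=> l_in l_sum; split=> //; apply/eqP; rewrite eqz_mod_dvd.
by apply: step_sum_mod l_sum; [exact: d_dvd_sub_c | exact: d_dvd_add_c].
Qed.

Lemma Rset_Qset i l : Rset n S T i l -> Qset n S T i l.
Proof.
case=> l_in walks; split=> //; have [u [v [u_range v_range uv]]] := inIn_endpoints l_in.
by rewrite -uv; apply: walk_step_sum uniq_S uniq_T (walks u v u_range v_range uv).
Qed.

Lemma Pset_Rset : eventually (fun i => forall l, Pset n S T i l -> Rset n S T i l).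
Proof.
pose P (p : nat * nat) i := (d %| (p.2%:Z - p.1%:Z - (i * c)%N%:Z)%R)%Z -> walk i p.1 p.2.
have [M walkM] : eventually (fun i => {in [seq (u, v) | u <- iota 1 n, v <- iota 1 n],
    forall p, P p i}).
  apply: eventually_all => _ /allpairsP[[u v] [/= + + ->]]; rewrite !mem_iota => u_in v_in.
  by apply: eventually_walk => /=; lia.
exists M => i le_i l [l_in l_mod]; split=> // u v u_range v_range uv.
apply: (walkM i le_i (u, v)).
  by apply/allpairsP; exists (u, v); rewrite !mem_iota; split=> //; lia.
by rewrite /= uv -eqz_mod_dvd; apply/eqP.
Qed.

End Toeplitz.

Unset Implicit Arguments.
Theorem theorem2p9 (n : nat) (S T : seq nat) :
  S != [::] -> T != [::] -> uniq S -> uniq T ->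
  all (fun s => (0 < s < n)%N) S -> all (fun t => (0 < t < n)%N) T ->
  (seqmax S + seqmin T <= n)%N -> (seqmin S + seqmax T <= n)%N ->
  exists M : nat, (0 < M)%N /\
    forall i : nat, (M <= i)%N -> forall l : int,
      (Pset n S T i l <-> Qset n S T i l) /\ (Qset n S T i l <-> Rset n S T i l).
Proof.
move=> S_neq0 T_neq0 uniq_S uniq_T S_range T_range maxS_minT minS_maxT.
have [M PR] : eventually (fun i => forall l, Pset n S T i l -> Rset n S T i l).
  exact: Pset_Rset.
have QP i l : Qset n S T i l -> Pset n S T i l by apply: Qset_Pset.
have RQ i l : Rset n S T i l -> Qset n S T i l by apply: Rset_Qset.
exists M.+1; split=> // i /ltnW/PR PR_i l.
split; split.
- by move/PR_i/RQ.
- exact: QP.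
- by move/QP/PR_i.
- exact: RQ.
Qed.
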